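(* Let $\mathcal E$ be an environment and $t_0,t_1$ closed terms with $t_0\approx_{\mathcal E}t_1$. Then for every closed evaluation context $F$, $F[t_0]\approx_{\mathcal E}F[t_1]$.
   Context: Terms of $\lambda_S$: $t ::= x \mid \lambda x.t \mid t\,t \mid \mathcal{S}k.t \mid \langle t\rangle$ (shift binds $k$; $\langle\cdot\rangle$ reset), up to $\alpha$-conversion. Values $v::=\lambda x.t$. Pure contexts $E ::= \Box \mid v\,E \mid E\,t$; evaluation contexts $F ::= \Box \mid v\,F \mid F\,t \mid \langle F\rangle$. Reduction: $F[(\lambda x.t)v]\to F[t\{v/x\}]$; $F[\langle E[\mathcal Sk.t]\rangle]\to F[\langle t\{\lambda x.\langle E[x]\rangle/k\}\rangle]$ ($x\notin\mathrm{fv}(E)$); $F[\langle v\rangle]\to F[v]$; $\to^*$ reflexive-transitive closure. Stuck term: not a value and irreducible; normal form: value or stuck term. Closures: for $R$ a relation on closed terms, $\widetilde R$ is the smallest relation containing $R$, all $(x,x)$, closed under all term constructors, restricted to closed terms; $\widehat R$ is the smallest relation on closed evaluation contexts with $\Box\widehat R\Box$, $v_0F_0\widehat Rv_1F_1$ if $F_0\widehat RF_1,v_0\widetilde Rv_1$; $F_0t_0\widehat RF_1t_1$ if $F_0\widehat RF_1,t_0\widetilde Rt_1$; $\langle F_0\rangle\widehat R\langle F_1\rangle$ if $F_0\widehat RF_1$. Environmental bisimilarity: an environment $\mathcal E$ is a relation on closed normal forms relating values only with values and stuck terms only with stuck terms; an environmental relation $\mathcal X$ is a set of environments and triples $(\mathcal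 E,t_0,t_1)$ with $t_0,t_1$ closed, written $t_0\mathcal X_{\mathcal E}t_1$. $\mathcal X$ is an environmental bisimulation if (1) whenever $t_0\mathcal X_{\mathcal E}t_1$: (a) $t_0\to t_0'$ implies $t_1\to^*t_1'$ with $t_0'\mathcal X_{\mathcal E}t_1'$; (b) if $t_0$ is a value $v_0$ then $t_1\to^*v_1$, a value, with $\mathcal E\cup\{(v_0,v_1)\}\in\mathcal X$; (c) if $t_0$ is stuck then $t_1\to^*t_1'$ stuck with $\mathcal E\cup\{(t_0,t_1')\}\in\mathcal X$; (d) symmetric conditions for $t_1$; (2) whenever $\mathcal E\in\mathcal X$: (a) $(\lambda x.t_0)\mathcal E(\lambda x.t_1)$ and $v_0\widetilde{\mathcal E}v_1$ imply $t_0\{v_0/x\}\mathcal X_{\mathcal E}t_1\{v_1/x\}$; (b) $E_0[\mathcal Sk.t_0]\mathcal EE_1[\mathcal Sk.t_1]$ and pure $E_0'\widehat{\mathcal E}E_1'$ imply $\langle t_0\{\lambda x.\langle E_0'[E_0[x]]\rangle/k\}\rangle\mathcal X_{\mathcal E}\langle t_1\{\lambda x.\langle E_1'[E_1[x]]\rangle/k\}\rangle$, $x$ fresh. $\approx$ is the largest environmental bisimulation; $t_0\approx_{\mathcal E}t_1$ means $(\mathcal E,t_0,t_1)\in\approx$. *)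

(* Lambda-calculus with shift/reset (lambda_S), de Bruijn syntax
   (terms are thus identified up to alpha-conversion). *)
From Stdlib Require Import Arith.

Inductive term : Type :=
| Var : nat -> term
| Lam : term -> term
| App : term -> term -> term
| Shift : term -> term        (* S k.t, k is index 0 in the body *)
| Reset : term -> term.

Fixpoint lift (d c : nat) (t : term) : term :=
  match t with
  | Var n => if c <=? n then Var (n + d) else Var n
  | Lam b => Lam (lift d (S c) b)
  | App a b => App (lift d c a) (lift d c b)
  | Shift b => Shift (lift d (S c) b)
  | Reset b => Reset (lift d c b)
  end.

Fixpoint subst_at (k : nat) (s : term) (t : term) : term :=
  match t with
  | Var n => if n =? k then lift k 0 s
             else if k <? n then Var (n - 1) else Var n
  | Lam b => Lam (subst_at (S k) s b)
  | App a b => App (subst_at k s a) (subst_at k s b)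
  | Shift b => Shift (subst_at (S k) s b)
  | Reset b => Reset (subst_at k s b)
  end.

Definition subst0 (s t : term) : term := subst_at 0 s t.

Fixpoint closed_at (n : nat) (t : term) : Prop :=
  match t with
  | Var m => m < n
  | Lam b => closed_at (S n) b
  | App a b => closed_at n a /\ closed_at n b
  | Shift b => closed_at (S n) b
  | Reset b => closed_at n b
  end.

Definition closed (t : term) : Prop := closed_at 0 t.

Definition is_value (t : term) : Prop := exists b, t = Lam b.

(* Contexts. Evaluation contexts F ::= [] | v F | F t | <F>,
   where v F with v = \x.b is represented as CVal b F.
   Pure contexts are those without CReset. *)
Inductive ctx : Type :=
| Hole : ctx
| CVal : term -> ctx -> ctx
| CFun : ctx -> term -> ctx
| CReset : ctx -> ctx.

Fixpoint plug (C : ctx) (t : term) : term :=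
  match C with
  | Hole => t
  | CVal b C' => App (Lam b) (plug C' t)
  | CFun C' u => App (plug C' t) u
  | CReset C' => Reset (plug C' t)
  end.

Fixpoint pure (C : ctx) : Prop :=
  match C with
  | Hole => True
  | CVal _ C' => pure C'
  | CFun C' _ => pure C'
  | CReset _ => False
  end.

Fixpoint lift_ctx (d c : nat) (C : ctx) : ctx :=
  match C with
  | Hole => Hole
  | CVal b C' => CVal (lift d (S c) b) (lift_ctx d c C')
  | CFun C' u => CFun (lift_ctx d c C') (lift d c u)
  | CReset C' => CReset (lift_ctx d c C')
  end.

Fixpoint closed_ctx (C : ctx) : Prop :=
  match C with
  | Hole => True
  | CVal b C' => closed (Lam b) /\ closed_ctx C'
  | CFun C' u => closed_ctx C' /\ closed u
  | CReset C' => closed_ctx C'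
  end.

(* the continuation \x.<E[x]> (x fresh) *)
Definition cont (E : ctx) : term := Lam (Reset (plug (lift_ctx 1 0 E) (Var 0))).

Definition cont2 (E' E : ctx) : term :=
  Lam (Reset (plug (lift_ctx 1 0 E') (plug (lift_ctx 1 0 E) (Var 0)))).

Inductive step : term -> term -> Prop :=
| step_beta : forall F b v, is_value v ->
    step (plug F (App (Lam b) v)) (plug F (subst0 v b))
| step_shift : forall F E t, pure E ->
    step (plug F (Reset (plug E (Shift t)))) (plug F (Reset (subst0 (cont E) t)))
| step_reset : forall F v, is_value v ->
    step (plug F (Reset v)) (plug F v).

Inductive steps : term -> term -> Prop :=
| steps_refl : forall t, steps t t
| steps_step : forall t u w, step t u -> steps u w -> steps t w.

Definition stuck (t : term) : Prop := ~ is_value t /\ forall u, ~ step t u.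

Definition normal_form (t : term) : Prop := is_value t \/ stuck t.

Definition rel := term -> term -> Prop.

Inductive tilde_open (R : rel) : term -> term -> Prop :=
| to_base : forall a b, R a b -> tilde_open R a b
| to_var : forall n, tilde_open R (Var n) (Var n)
| to_lam : forall a b, tilde_open R a b -> tilde_open R (Lam a) (Lam b)
| to_app : forall a a' b b', tilde_open R a b -> tilde_open R a' b' ->
    tilde_open R (App a a') (App b b')
| to_shift : forall a b, tilde_open R a b -> tilde_open R (Shift a) (Shift b)
| to_reset : forall a b, tilde_open R a b -> tilde_open R (Reset a) (Reset b).

Definition tilde (R : rel) (a b : term) : Prop :=
  tilde_open R a b /\ closed a /\ closed b.

Inductive hat (R : rel) : ctx -> ctx -> Prop :=
| hat_hole : hat R Hole Hole
| hat_val : forall b0 b1 F0 F1, hat R F0 F1 -> tilde R (Lam b0) (Lam b1) ->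
    hat R (CVal b0 F0) (CVal b1 F1)
| hat_fun : forall F0 F1 t0 t1, hat R F0 F1 -> tilde R t0 t1 ->
    hat R (CFun F0 t0) (CFun F1 t1)
| hat_reset : forall F0 F1, hat R F0 F1 -> hat R (CReset F0) (CReset F1).

Definition is_env (E : rel) : Prop :=
  forall a b, E a b ->
    closed a /\ closed b /\ normal_form a /\ normal_form b /\
    ((is_value a /\ is_value b) \/ (stuck a /\ stuck b)).

Definition env_add (E : rel) (a b : term) : rel :=
  fun x y => E x y \/ (x = a /\ y = b).

Record env_relation : Type := {
  X_env : rel -> Prop;
  X_tri : rel -> term -> term -> Prop
}.

Definition is_env_relation (X : env_relation) : Prop :=
  (forall E, X_env X E -> is_env E) /\
  (forall E t0 t1, X_tri X E t0 t1 -> is_env E /\ closed t0 /\ closed t1).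

Definition env_bisimulation (X : env_relation) : Prop :=
  is_env_relation X /\
  (forall E t0 t1, X_tri X E t0 t1 ->
     (forall t0', step t0 t0' -> exists t1', steps t1 t1' /\ X_tri X E t0' t1') /\
     (is_value t0 -> exists v1, steps t1 v1 /\ is_value v1 /\ X_env X (env_add E t0 v1)) /\
     (stuck t0 -> exists t1', steps t1 t1' /\ stuck t1' /\ X_env X (env_add E t0 t1')) /\
     (forall t1', step t1 t1' -> exists t0', steps t0 t0' /\ X_tri X E t0' t1') /\
     (is_value t1 -> exists v0, steps t0 v0 /\ is_value v0 /\ X_env X (env_add E v0 t1)) /\
     (stuck t1 -> exists t0', steps t0 t0' /\ stuck t0' /\ X_env X (env_add E t0' t1))) /\
  (* (2) *)
  (forall E, X_env X E ->
     (* (a) *)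
     (forall b0 b1 v0 v1, E (Lam b0) (Lam b1) -> is_value v0 -> is_value v1 ->
        tilde E v0 v1 -> X_tri X E (subst0 v0 b0) (subst0 v1 b1)) /\
     (* (b) *)
     (forall E0 E1 s0 s1 E0' E1', pure E0 -> pure E1 ->
        E (plug E0 (Shift s0)) (plug E1 (Shift s1)) ->
        pure E0' -> pure E1' -> hat E E0' E1' ->
        X_tri X E (Reset (subst0 (cont2 E0' E0) s0))
                  (Reset (subst0 (cont2 E1' E1) s1)))).

(* environmental bisimilarity: the largest environmental bisimulation,
   i.e. the union of all environmental bisimulations *)
Definition bisimilar (E : rel) (t0 t1 : term) : Prop :=
  exists X, env_bisimulation X /\ X_tri X E t0 t1.

From Stdlib Require Import Arith Lia FunctionalExtensionality PropExtensionality.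

(* Fix an environmental bisimulation X and relate, under an environment G whose pairs are
   ~E-related for some E in X,
   (i) the terms related by ~E, and
   (ii) the terms F0[s0] and F1[s1] with F0 ^E F1 and s0 X_E s1.
   This relation is again an environmental bisimulation.  In case (ii), as long as s0 reduces
   the step happens in the hole and X matches it; once s0 is a value or stuck, X makes s1 reach
   a partner s1' and adds (s0, s1') to E, which lands in case (i).  In case (i) a redex either
   lies in the common ~E-skeleton and is matched syntactically, or is built from a value or
   stuck pair of E, where clauses (2a) and (2b) of X take over; values and stuck terms are
   preserved by ~E.  The symmetric conditions follow by running the argument on the converse
   of X, and the theorem is case (ii) with F0 = F1 = F. *)

Fixpoint ctx_comp (A B : ctx) : ctx :=
  match A with
  | Hole => B
  | CVal b A' => CVal b (ctx_comp A' B)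
  | CFun A' u => CFun (ctx_comp A' B) u
  | CReset A' => CReset (ctx_comp A' B)
  end.

Lemma plug_ctx_comp A B t : plug (ctx_comp A B) t = plug A (plug B t).
Proof. induction A; simpl; congruence. Qed.

Lemma ctx_comp_hole_r A : ctx_comp A Hole = A.
Proof. induction A; simpl; congruence. Qed.

Lemma lift_ctx_comp d c A B :
  lift_ctx d c (ctx_comp A B) = ctx_comp (lift_ctx d c A) (lift_ctx d c B).
Proof. induction A; simpl; congruence. Qed.

Lemma pure_ctx_comp A B : pure (ctx_comp A B) <-> pure A /\ pure B.
Proof. induction A; simpl; tauto. Qed.

Lemma closed_ctx_comp A B : closed_ctx (ctx_comp A B) <-> closed_ctx A /\ closed_ctx B.
Proof. induction A; simpl; tauto. Qed.

Lemma cont_ctx_comp A B : cont (ctx_comp A B) = cont2 A B.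
Proof. unfold cont, cont2. now rewrite lift_ctx_comp, plug_ctx_comp. Qed.

Lemma cont2_ctx_comp A B C : cont2 A (ctx_comp B C) = cont2 (ctx_comp A B) C.
Proof. unfold cont2. now rewrite !lift_ctx_comp, !plug_ctx_comp. Qed.

Lemma closed_at_weaken t : forall n m, closed_at n t -> n <= m -> closed_at m t.
Proof.
  induction t; simpl; intros n' m Ht Hnm; try lia.
  - apply (IHt (S n')); auto; lia.
  - destruct Ht; split; eauto.
  - apply (IHt (S n')); auto; lia.
  - eauto.
Qed.

Lemma lift_closed_at t : forall n d c, closed_at n t -> n <= c -> lift d c t = t.
Proof.
  induction t; simpl; intros n' d c Ht Hc.
  - destruct (Nat.leb_spec c n); [lia | reflexivity].
  - rewrite (IHt (S n')); auto; lia.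
  - destruct Ht; rewrite (IHt1 n'), (IHt2 n'); auto.
  - rewrite (IHt (S n')); auto; lia.
  - rewrite (IHt n'); auto.
Qed.

Lemma subst_closed_at t : forall n k s, closed_at n t -> n <= k -> subst_at k s t = t.
Proof.
  induction t; simpl; intros n' k s Ht Hk.
  - destruct (Nat.eqb_spec n k); [lia|].
    destruct (Nat.ltb_spec k n); [lia | reflexivity].
  - rewrite (IHt (S n')); auto; lia.
  - destruct Ht; rewrite (IHt1 n'), (IHt2 n'); auto.
  - rewrite (IHt (S n')); auto; lia.
  - rewrite (IHt n'); auto.
Qed.

Lemma lift_closed d c t : closed t -> lift d c t = t.
Proof. intros Ht; apply (lift_closed_at t 0); auto; lia. Qed.

Lemma subst_closed k s t : closed t -> subst_at k s t = t.
Proof. intros Ht; apply (subst_closed_at t 0); auto; lia. Qed.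

Lemma lift_ctx_closed d c E : closed_ctx E -> lift_ctx d c E = E.
Proof.
  induction E; simpl; intros HE; auto.
  - destruct HE as [Hb HE]. rewrite (lift_closed_at t 1), IHE; auto; lia.
  - destruct HE. rewrite IHE, lift_closed; auto.
  - rewrite IHE; auto.
Qed.

Lemma closed_plug F t : closed (plug F t) <-> closed_ctx F /\ closed t.
Proof. induction F; unfold closed in *; simpl in *; tauto. Qed.

Lemma closed_at_plug F t n : closed_ctx F -> closed_at n t -> closed_at n (plug F t).
Proof.
  induction F; simpl; intros HF Ht; auto.
  - destruct HF as [Hb HF]. split; auto. apply (closed_at_weaken _ 1); auto; lia.
  - destruct HF. split; auto. apply (closed_at_weaken _ 0); auto; lia.
Qed.

Lemma closed_at_subst t : forall n k s,
  closed_at (S n) t -> k <= n -> closed s -> closed_at n (subst_at k s t).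
Proof.
  induction t; simpl; intros n' k s Ht Hk Hs.
  - destruct (Nat.eqb_spec n k).
    + rewrite lift_closed; auto. apply (closed_at_weaken _ 0); auto; lia.
    + destruct (Nat.ltb_spec k n); simpl; lia.
  - apply IHt; auto; lia.
  - destruct Ht; split; auto.
  - apply IHt; auto; lia.
  - apply IHt; auto.
Qed.

Lemma closed_subst0 b v : closed (Lam b) -> closed v -> closed (subst0 v b).
Proof. intros; apply closed_at_subst; auto. Qed.

Lemma closed_cont2 E' E : closed_ctx E' -> closed_ctx E -> closed (cont2 E' E).
Proof.
  intros HE' HE. unfold cont2, closed; simpl. rewrite !lift_ctx_closed; auto.
  apply closed_at_plug; auto. apply closed_at_plug; simpl; auto.
Qed.

Lemma closed_cont E : closed_ctx E -> closed (cont E).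
Proof.
  intros HE. change (cont E) with (cont (ctx_comp Hole E)).
  rewrite cont_ctx_comp. apply closed_cont2; simpl; auto.
Qed.

(** * Reduction *)

Inductive contract : term -> term -> Prop :=
| contract_beta b v : is_value v -> contract (App (Lam b) v) (subst0 v b)
| contract_reset v : is_value v -> contract (Reset v) v
| contract_shift E t : pure E ->
    contract (Reset (plug E (Shift t))) (Reset (subst0 (cont E) t)).

Lemma contract_step F r r' : contract r r' -> step (plug F r) (plug F r').
Proof. intros []; constructor; auto. Qed.

Lemma step_iff_contract t u :
  step t u <-> exists F r r', contract r r' /\ t = plug F r /\ u = plug F r'.
Proof.
  split.
  - intros []; do 3 eexists; (split; [| split; reflexivity]); constructor; auto.
  - intros (F & r & r' & Hr & -> & ->). now apply contract_step.
Qed.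

Lemma plug_value F t : is_value (plug F t) -> F = Hole /\ is_value t.
Proof. destruct F; simpl; intros [b Hb]; try discriminate. split; [| exists b]; auto. Qed.

Lemma shift_not_value t : ~ is_value (Shift t).
Proof. intros [b Hb]; discriminate. Qed.

Lemma contract_not_value r r' : contract r r' -> ~ is_value r.
Proof. intros Hr [w Hw]; destruct Hr; discriminate. Qed.

Ltac invert_value_plugs :=
  repeat match goal with
  | H : is_value (plug ?F ?x) |- _ => apply plug_value in H as [? ?]; subst
  | H : Lam ?b = plug ?F ?x |- _ =>
      destruct (plug_value F x (ex_intro _ b (eq_sym H))); clear H; subst
  | H : plug ?F ?x = Lam ?b |- _ =>
      destruct (plug_value F x (ex_intro _ b H)); clear H; subst
  end;
  try match goal with
  | H : is_value (Shift _) |- _ => exfalso; exact (shift_not_value _ H)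
  | H : is_value ?r, C : contract ?r _ |- _ => exfalso; exact (contract_not_value _ _ C H)
  end.

Lemma pure_shift_not_redex E t F r r' :
  pure E -> contract r r' -> plug E (Shift t) <> plug F r.
Proof.
  revert F. induction E; simpl; intros F HE Hr Heq; try contradiction;
    destruct F; simpl in Heq; try discriminate; subst;
    try (inversion Hr; subst; invert_value_plugs; fail);
    injection Heq; intros; subst; invert_value_plugs; eapply IHE; eauto.
Qed.

Lemma contract_plug_hole r1 r1' F r2 r2' :
  contract r1 r1' -> contract r2 r2' -> r1 = plug F r2 -> F = Hole.
Proof.
  intros H1 H2 Heq. destruct F; auto; exfalso; simpl in Heq; subst;
    inversion H1; subst; invert_value_plugs.
  eapply pure_shift_not_redex; eauto.
Qed.

Lemma plug_contract_inj F1 : forall F2 r1 r1' r2 r2',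
  contract r1 r1' -> contract r2 r2' -> plug F1 r1 = plug F2 r2 -> F1 = F2 /\ r1 = r2.
Proof.
  induction F1; intros F2 r1 r1' r2 r2' H1 H2 Heq.
  - pose proof (contract_plug_hole _ _ _ _ _ H1 H2 Heq); subst; auto.
  - destruct F2.
    + pose proof (contract_plug_hole _ _ _ _ _ H2 H1 (eq_sym Heq)); discriminate.
    + injection Heq; intros Heq' ->.
      destruct (IHF1 _ _ _ _ _ H1 H2 Heq'); subst; auto.
    + injection Heq; intros; subst; invert_value_plugs.
    + discriminate.
  - destruct F2.
    + pose proof (contract_plug_hole _ _ _ _ _ H2 H1 (eq_sym Heq)); discriminate.
    + injection Heq; intros; subst; invert_value_plugs.
    + injection Heq; intros -> Heq'.
      destruct (IHF1 _ _ _ _ _ H1 H2 Heq'); subst; auto.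
    + discriminate.
  - destruct F2; try discriminate.
    + pose proof (contract_plug_hole _ _ _ _ _ H2 H1 (eq_sym Heq)); discriminate.
    + injection Heq; intros Heq'.
      destruct (IHF1 _ _ _ _ _ H1 H2 Heq'); subst; auto.
Qed.

Lemma plug_pure_shift_inj E1 : forall E2 t1 t2, pure E1 -> pure E2 ->
  plug E1 (Shift t1) = plug E2 (Shift t2) -> E1 = E2 /\ t1 = t2.
Proof.
  induction E1; intros E2 t1 t2 P1 P2 Heq; destruct E2; simpl in *;
    try discriminate; try contradiction.
  - injection Heq; auto.
  - injection Heq; intros Heq' ->.
    destruct (IHE1 _ _ _ P1 P2 Heq'); subst; auto.
  - injection Heq; intros; subst; invert_value_plugs.
  - injection Heq; intros; subst; invert_value_plugs.
  - injection Heq; intros -> Heq'.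
    destruct (IHE1 _ _ _ P1 P2 Heq'); subst; auto.
Qed.

Lemma contract_det r u1 u2 : contract r u1 -> contract r u2 -> u1 = u2.
Proof.
  intros H1 H2. destruct H1 as [| | E t HE]; inversion H2 as [| | E' t' HE' Heq];
    subst; auto; invert_value_plugs.
  destruct (plug_pure_shift_inj _ _ _ _ HE' HE Heq); subst; auto.
Qed.

Lemma step_det t u1 u2 : step t u1 -> step t u2 -> u1 = u2.
Proof.
  intros H1 H2.
  apply step_iff_contract in H1 as (F1 & r1 & r1' & C1 & -> & ->).
  apply step_iff_contract in H2 as (F2 & r2 & r2' & C2 & Heq & ->).
  destruct (plug_contract_inj _ _ _ _ _ _ C1 C2 Heq); subst.
  now rewrite (contract_det _ _ _ C1 C2).
Qed.

Lemma step_plug F t u : step t u -> step (plug F t) (plug F u).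
Proof.
  intros H. apply step_iff_contract in H as (F1 & r & r' & C & -> & ->).
  rewrite <- !plug_ctx_comp. now apply contract_step.
Qed.

Lemma steps_plug F t u : steps t u -> steps (plug F t) (plug F u).
Proof. induction 1; econstructor; eauto using step_plug. Qed.

Lemma steps_trans t u w : steps t u -> steps u w -> steps t w.
Proof. induction 1; intros; auto. econstructor; eauto. Qed.

Lemma step_steps t u : step t u -> steps t u.
Proof. intros; econstructor; eauto; constructor. Qed.

Lemma value_no_step v u : is_value v -> ~ step v u.
Proof.
  intros [b ->] Hs. apply step_iff_contract in Hs as (F & r & r' & C & Heq & _).
  destruct (plug_value F r (ex_intro _ b (eq_sym Heq))).
  eapply contract_not_value; eauto.
Qed.

Lemma pure_shift_stuck E t : pure E -> stuck (plug E (Shift t)).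
Proof.
  intros HE. split.
  - intros Hv. destruct (plug_value _ _ Hv). eapply shift_not_value; eauto.
  - intros u Hs. apply step_iff_contract in Hs as (F & r & r' & C & Heq & _).
    eapply pure_shift_not_redex; eauto.
Qed.

Lemma closed_trichotomy t : closed t ->
  is_value t \/ (exists u, step t u) \/ (exists E s, pure E /\ t = plug E (Shift s)).
Proof.
  induction t; unfold closed in *; simpl; intros Hc.
  - lia.
  - left; eexists; eauto.
  - destruct Hc as [Hc1 Hc2].
    destruct (IHt1 Hc1) as [[b ->] | [[u Hu] | (E & s & HE & ->)]].
    + destruct (IHt2 Hc2) as [Hv | [[u Hu] | (E & s & HE & ->)]].
      * right; left. eexists. apply (step_beta Hole); auto.
      * right; left. eexists. apply (step_plug (CVal b Hole)); eauto.
      * right; right. exists (CVal b E), s; simpl; auto.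
    + right; left. eexists. apply (step_plug (CFun Hole t2)); eauto.
    + right; right. exists (CFun E t2), s; simpl; auto.
  - right; right. exists Hole, t; simpl; auto.
  - right; left. destruct (IHt Hc) as [Hv | [[u Hu] | (E & s & HE & ->)]].
    + eexists. apply (step_reset Hole); auto.
    + eexists. apply (step_plug (CReset Hole)); eauto.
    + eexists. apply (step_shift Hole); auto.
Qed.

Lemma stuck_pure_shift t : closed t -> stuck t -> exists E s, pure E /\ t = plug E (Shift s).
Proof.
  intros Hc [Hv Hs].
  destruct (closed_trichotomy t Hc) as [? | [[u Hu] | ?]]; [contradiction | | auto].
  exfalso; eapply Hs; eauto.
Qed.

Lemma contract_closed r r' : contract r r' -> closed r -> closed r'.
Proof.
  intros [] Hc; unfold closed in Hc; simpl in Hc.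
  - destruct Hc. apply closed_subst0; auto.
  - exact Hc.
  - apply (closed_plug E (Shift t)) in Hc as [HE Ht].
    apply closed_at_subst; auto. apply closed_cont; auto.
Qed.

Lemma step_closed t u : step t u -> closed t -> closed u.
Proof.
  intros H Hc. apply step_iff_contract in H as (F & r & r' & C & -> & ->).
  apply closed_plug in Hc as [? ?]. apply closed_plug; eauto using contract_closed.
Qed.

Definition converse (R : rel) : rel := fun a b => R b a.

Definition rel_closed (R : rel) : Prop := forall a b, R a b -> closed a /\ closed b.

Lemma is_env_rel_closed R : is_env R -> rel_closed R.
Proof. intros H a b Hab. destruct (H a b Hab) as (? & ? & _); auto. Qed.

Lemma is_env_converse R : is_env R -> is_env (converse R).
Proof.
  intros H a b Hab. destruct (H b a Hab) as (? & ? & ? & ? & [[] | []]); repeat split; tauto.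
Qed.

Lemma env_no_step R a b u : is_env R -> R a b -> ~ step a u.
Proof.
  intros HR Hab Hs. destruct (HR _ _ Hab) as (_ & _ & [Hv | [_ Hst]] & _).
  - eapply value_no_step; eauto.
  - eapply Hst; eauto.
Qed.

Ltac tilde_constructor :=
  first [apply to_var | apply to_lam | apply to_app | apply to_shift | apply to_reset].

Lemma tilde_open_refl R t : tilde_open R t t.
Proof. induction t; tilde_constructor; auto. Qed.

Lemma tilde_open_sub R S a b : (forall x y, R x y -> tilde_open S x y) ->
  tilde_open R a b -> tilde_open S a b.
Proof. intros HRS H; induction H; try tilde_constructor; auto. Qed.

Lemma tilde_open_converse R a b : tilde_open R a b -> tilde_open (converse R) b a.
Proof. induction 1; try tilde_constructor; auto. now apply to_base. Qed.

Lemma tilde_converse R a b : tilde R a b -> tilde (converse R) b a.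
Proof. intros (? & ? & ?); split; auto using tilde_open_converse. Qed.

Lemma tilde_open_lift R a b : rel_closed R -> tilde_open R a b ->
  forall d c, tilde_open R (lift d c a) (lift d c b).
Proof.
  intros HR; induction 1; simpl; intros; try (tilde_constructor; auto).
  - destruct (HR _ _ H). rewrite !lift_closed; auto. now apply to_base.
  - destruct (c <=? n); tilde_constructor.
Qed.

Lemma tilde_open_subst R a b : rel_closed R -> tilde_open R a b ->
  forall k v0 v1, tilde_open R v0 v1 -> tilde_open R (subst_at k v0 a) (subst_at k v1 b).
Proof.
  intros HR; induction 1; simpl; intros; try (tilde_constructor; auto).
  - destruct (HR _ _ H). rewrite !subst_closed; auto. now apply to_base.
  - destruct (n =? k); [now apply tilde_open_lift|]. destruct (k <? n); tilde_constructor.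
Qed.

Lemma tilde_open_value R v v1 : is_env R -> tilde_open R v v1 -> is_value v -> is_value v1.
Proof.
  intros HR H [b ->]. inversion H; subst.
  - destruct (HR _ _ H0) as (_ & _ & _ & _ & [[_ ?] | [[Hn _] _]]); auto.
    exfalso; apply Hn; eexists; eauto.
  - eexists; eauto.
Qed.

Lemma tilde_open_app_inv R a a' y : tilde_open R (App a a') y ->
  R (App a a') y \/ exists b b', y = App b b' /\ tilde_open R a b /\ tilde_open R a' b'.
Proof. intros H; inversion H; subst; eauto 7. Qed.

Lemma tilde_open_lam_inv R a y : tilde_open R (Lam a) y ->
  R (Lam a) y \/ exists b, y = Lam b /\ tilde_open R a b.
Proof. intros H; inversion H; subst; eauto. Qed.

Lemma tilde_open_reset_inv R a y : tilde_open R (Reset a) y ->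
  R (Reset a) y \/ exists b, y = Reset b /\ tilde_open R a b.
Proof. intros H; inversion H; subst; eauto. Qed.

Inductive hat_open (R : rel) : ctx -> ctx -> Prop :=
| ho_hole : hat_open R Hole Hole
| ho_val : forall b0 b1 F0 F1, hat_open R F0 F1 -> tilde_open R (Lam b0) (Lam b1) ->
    hat_open R (CVal b0 F0) (CVal b1 F1)
| ho_fun : forall F0 F1 t0 t1, hat_open R F0 F1 -> tilde_open R t0 t1 ->
    hat_open R (CFun F0 t0) (CFun F1 t1)
| ho_reset : forall F0 F1, hat_open R F0 F1 -> hat_open R (CReset F0) (CReset F1).

Lemma hat_hat_open R F0 F1 : hat R F0 F1 -> hat_open R F0 F1.
Proof. induction 1; constructor; auto; apply H0. Qed.

Lemma hat_closed_ctx R F0 F1 : hat R F0 F1 -> closed_ctx F0 /\ closed_ctx F1.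
Proof. induction 1; simpl; try tauto; destruct H0 as (_ & ? & ?); tauto. Qed.

Lemma hat_open_hat R F0 F1 : hat_open R F0 F1 -> closed_ctx F0 -> closed_ctx F1 -> hat R F0 F1.
Proof.
  induction 1; simpl; intros; constructor; try apply IHhat_open; try split; tauto.
Qed.

Lemma hat_open_refl R F : hat_open R F F.
Proof. induction F; constructor; auto using tilde_open_refl. Qed.

Lemma hat_refl R F : closed_ctx F -> hat R F F.
Proof. intros; apply hat_open_hat; auto using hat_open_refl. Qed.

Lemma hat_open_sub R S F0 F1 : (forall x y, R x y -> tilde_open S x y) ->
  hat_open R F0 F1 -> hat_open S F0 F1.
Proof. intros HRS; induction 1; constructor; eauto using tilde_open_sub. Qed.

Lemma hat_converse R F0 F1 : hat R F0 F1 -> hat (converse R) F1 F0.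
Proof.
  intros H. destruct (hat_closed_ctx _ _ _ H). apply hat_open_hat; auto.
  apply hat_hat_open in H. clear -H. induction H; constructor; auto using tilde_open_converse.
Qed.

Lemma hat_open_plug R F0 F1 x0 x1 : hat_open R F0 F1 -> tilde_open R x0 x1 ->
  tilde_open R (plug F0 x0) (plug F1 x1).
Proof. induction 1; simpl; intros; try tilde_constructor; auto. Qed.

Lemma hat_open_ctx_comp R A0 A1 B0 B1 : hat_open R A0 A1 -> hat_open R B0 B1 ->
  hat_open R (ctx_comp A0 B0) (ctx_comp A1 B1).
Proof. induction 1; simpl; intros; try constructor; auto. Qed.

Lemma hat_open_pure R E0 E1 : hat_open R E0 E1 -> pure E0 -> pure E1.
Proof. induction 1; simpl; auto. Qed.

Lemma tilde_open_plug_inv R F x y : is_env R -> tilde_open R (plug F x) y ->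
  (exists F1 x1, y = plug F1 x1 /\ hat_open R F F1 /\ tilde_open R x x1) \/
  (exists Fa Fb Fa1 z, F = ctx_comp Fa Fb /\ R (plug Fb x) z /\ y = plug Fa1 z /\
     hat_open R Fa Fa1).
Proof.
  intros HR. revert y.
  induction F as [| b F IH | F IH u | F IH]; simpl; intros y H.
  - left. exists Hole, y. repeat split; auto; constructor.
  - destruct (tilde_open_app_inv _ _ _ _ H) as [Hb | (a1 & y' & -> & Ha & Hy)].
    { right. exists Hole, (CVal b F), Hole, y. repeat split; auto; constructor. }
    assert (Hv : is_value a1) by (eapply tilde_open_value; eauto; eexists; eauto).
    destruct Hv as [b1 ->].
    destruct (IH _ Hy) as [(F1 & x1 & -> & HF & Hx) | (Fa & Fb & Fa1 & z & -> & Hz & -> & HF)].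
    + left. exists (CVal b1 F1), x1. repeat split; auto; constructor; auto.
    + right. exists (CVal b Fa), Fb, (CVal b1 Fa1), z. repeat split; auto; constructor; auto.
  - destruct (tilde_open_app_inv _ _ _ _ H) as [Hb | (y' & u1 & -> & Hy & Hu)].
    { right. exists Hole, (CFun F u), Hole, y. repeat split; auto; constructor. }
    destruct (IH _ Hy) as [(F1 & x1 & -> & HF & Hx) | (Fa & Fb & Fa1 & z & -> & Hz & -> & HF)].
    + left. exists (CFun F1 u1), x1. repeat split; auto; constructor; auto.
    + right. exists (CFun Fa u), Fb, (CFun Fa1 u1), z. repeat split; auto; constructor; auto.
  - destruct (tilde_open_reset_inv _ _ _ H) as [Hb | (y' & -> & Hy)].
    { right. exists Hole, (CReset F), Hole, y. repeat split; auto; constructor. }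
    destruct (IH _ Hy) as [(F1 & x1 & -> & HF & Hx) | (Fa & Fb & Fa1 & z & -> & Hz & -> & HF)].
    + left. exists (CReset F1), x1. repeat split; auto; constructor; auto.
    + right. exists (CReset Fa), Fb, (CReset Fa1), z. repeat split; auto; constructor; auto.
Qed.

Lemma tilde_open_pure_shift_inv R E t y : is_env R -> pure E ->
  tilde_open R (plug E (Shift t)) y ->
  (exists E1 t1, y = plug E1 (Shift t1) /\ pure E1 /\ hat_open R E E1 /\ tilde_open R t t1) \/
  (exists Ea Eb Ea1 Eb1 t1, E = ctx_comp Ea Eb /\ pure Ea /\ pure Eb /\ pure Ea1 /\ pure Eb1 /\
     R (plug Eb (Shift t)) (plug Eb1 (Shift t1)) /\ y = plug Ea1 (plug Eb1 (Shift t1)) /\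
     hat_open R Ea Ea1).
Proof.
  intros HR HE H.
  assert (Hpartner : forall Eb z, pure Eb -> R (plug Eb (Shift t)) z ->
            exists Eb1 t1, pure Eb1 /\ z = plug Eb1 (Shift t1)).
  { intros Eb z HEb Hz. destruct (HR _ _ Hz) as (_ & Hcz & _ & _ & [[Hv _] | [_ Hs]]).
    - exfalso. exact (proj1 (pure_shift_stuck Eb t HEb) Hv).
    - apply stuck_pure_shift; auto. }
  destruct (tilde_open_plug_inv R E _ _ HR H) as
    [(E1 & x1 & -> & HE1 & Hx) | (Ea & Eb & Ea1 & z & -> & Hz & -> & HEa)].
  - inversion Hx as [? ? Hb | | | | t' t1 Ht |]; subst.
    + destruct (Hpartner Hole x1 I Hb) as (Eb1 & t1 & HEb1 & ->).
      right. exists E, Hole, E1, Eb1, t1. rewrite ctx_comp_hole_r.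
      repeat split; eauto using hat_open_pure.
    + left. exists E1, t1. repeat split; eauto using hat_open_pure.
  - apply pure_ctx_comp in HE as [HEa' HEb].
    destruct (Hpartner Eb z HEb Hz) as (Eb1 & t1 & HEb1 & ->).
    right. exists Ea, Eb, Ea1, Eb1, t1. repeat split; eauto using hat_open_pure.
Qed.

Lemma tilde_open_stuck R a b : is_env R -> closed a -> stuck a -> tilde_open R a b -> stuck b.
Proof.
  intros HR Ha Hs H. destruct (stuck_pure_shift a Ha Hs) as (E & t & HE & ->).
  destruct (tilde_open_pure_shift_inv R E t b HR HE H) as
    [(E1 & t1 & -> & HE1 & _) | (Ea & Eb & Ea1 & Eb1 & t1 & _ & _ & _ & HEa1 & HEb1 & _ & -> & _)].
  - now apply pure_shift_stuck.
  - rewrite <- plug_ctx_comp. apply pure_shift_stuck, pure_ctx_comp; auto.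
Qed.

Lemma tilde_open_cont R E0 E1 : hat_open R E0 E1 -> closed_ctx E0 -> closed_ctx E1 ->
  tilde_open R (cont E0) (cont E1).
Proof.
  intros H HE0 HE1. unfold cont. rewrite !lift_ctx_closed; auto.
  apply to_lam, to_reset, hat_open_plug; auto. apply to_var.
Qed.

(** * Closure of an environmental bisimulation under evaluation contexts *)

Definition tilde_incl (G E : rel) : Prop := forall a b, G a b -> tilde E a b.

Lemma tilde_incl_refl E : rel_closed E -> tilde_incl E E.
Proof. intros HE a b Hab. destruct (HE a b Hab). split; auto. now apply to_base. Qed.

Lemma tilde_incl_tilde_open G E a b : tilde_incl G E -> tilde_open G a b -> tilde_open E a b.
Proof. intros H; apply tilde_open_sub. intros; apply H; auto. Qed.

Lemma tilde_incl_env_add G E a b : tilde_incl G E -> tilde_incl G (env_add E a b).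
Proof.
  intros H x y Hxy. destruct (H x y Hxy) as (Ht & ? & ?). split; auto.
  eapply tilde_open_sub; [| eauto]. intros; apply to_base; left; auto.
Qed.

Lemma env_add_tilde_incl G E a b : tilde_incl G E -> tilde E a b ->
  tilde_incl (env_add G a b) E.
Proof. intros H Hab x y [Hxy | [-> ->]]; auto. Qed.

Lemma is_env_env_add G a b : is_env G -> closed a -> closed b ->
  (is_value a /\ is_value b) \/ (stuck a /\ stuck b) -> is_env (env_add G a b).
Proof.
  intros HG Ha Hb Hn x y [Hxy | [-> ->]]; [now apply HG |].
  unfold normal_form. destruct Hn as [[] | []]; repeat split; auto.
Qed.

Lemma tilde_incl_converse G E : tilde_incl G E -> tilde_incl (converse G) (converse E).
Proof. intros H a b Hab. apply tilde_converse, H; auto. Qed.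

(* [G] only has to be covered by ~[E], so that [E] can grow when a plugged pair reaches a
   normal form. *)
Inductive ctx_closure_tri (X : env_relation) (G : rel) : term -> term -> Prop :=
| cct_tilde E t0 t1 : X_env X E -> tilde_incl G E -> tilde_open E t0 t1 ->
    ctx_closure_tri X G t0 t1
| cct_plug E F0 F1 s0 s1 : tilde_incl G E -> hat E F0 F1 -> X_tri X E s0 s1 ->
    ctx_closure_tri X G (plug F0 s0) (plug F1 s1).

Definition ctx_closure (X : env_relation) : env_relation := {|
  X_env := fun G => is_env G /\ exists E, X_env X E /\ tilde_incl G E;
  X_tri := fun G t0 t1 => is_env G /\ closed t0 /\ closed t1 /\ ctx_closure_tri X G t0 t1 |}.

Definition sim_left (X : env_relation) (G : rel) (t0 t1 : term) : Prop :=
  (forall t0', step t0 t0' -> exists t1', steps t1 t1' /\ X_tri X G t0' t1') /\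
  (is_value t0 -> exists v1, steps t1 v1 /\ is_value v1 /\ X_env X (env_add G t0 v1)) /\
  (stuck t0 -> exists t1', steps t1 t1' /\ stuck t1' /\ X_env X (env_add G t0 t1')).

Lemma sim_left_steps X G t0 t1 t1' : steps t1 t1' -> sim_left X G t0 t1' -> sim_left X G t0 t1.
Proof.
  intros Hs (Hstep & Hval & Hstuck). repeat split.
  - intros t0' H. destruct (Hstep t0' H) as (u & ? & ?). exists u; eauto using steps_trans.
  - intros H. destruct (Hval H) as (u & ? & ?). exists u; eauto using steps_trans.
  - intros H. destruct (Hstuck H) as (u & ? & ?). exists u; eauto using steps_trans.
Qed.

Lemma ctx_closure_env_add X G E a b : is_env G -> X_env X E -> tilde_incl G E ->
  closed a -> closed b -> tilde_open E a b ->
  (is_value a /\ is_value b) \/ (stuck a /\ stuck b) ->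
  X_env (ctx_closure X) (env_add G a b).
Proof.
  intros HG HXE Hincl Ha Hb Hab Hn. split; [now apply is_env_env_add |].
  exists E. split; auto. apply env_add_tilde_incl; [| split]; auto.
Qed.

Section CtxClosure.

Variable X : env_relation.
Hypothesis HX : env_bisimulation X.

Lemma bisim_env_is_env E : X_env X E -> is_env E.
Proof. apply HX. Qed.

Lemma bisim_tri_closed E s0 s1 : X_tri X E s0 s1 -> is_env E /\ closed s0 /\ closed s1.
Proof. apply HX. Qed.

Lemma bisim_sim_left E s0 s1 : X_tri X E s0 s1 -> sim_left X E s0 s1.
Proof.
  intros H. destruct HX as (_ & Hsim & _).
  destruct (Hsim _ _ _ H) as (? & ? & ? & _). split; auto.
Qed.

Lemma bisim_beta E b0 b1 v0 v1 : X_env X E -> E (Lam b0) (Lam b1) ->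
  is_value v0 -> is_value v1 -> tilde E v0 v1 -> X_tri X E (subst0 v0 b0) (subst0 v1 b1).
Proof. intros HE. apply (proj2 (proj2 HX) E HE). Qed.

Lemma bisim_shift E E0 E1 s0 s1 E0' E1' : X_env X E -> pure E0 -> pure E1 ->
  E (plug E0 (Shift s0)) (plug E1 (Shift s1)) -> pure E0' -> pure E1' -> hat E E0' E1' ->
  X_tri X E (Reset (subst0 (cont2 E0' E0) s0)) (Reset (subst0 (cont2 E1' E1) s1)).
Proof. intros HE. apply (proj2 (proj2 HX) E HE). Qed.

Definition tilde_or_tri (E : rel) (a b : term) : Prop := tilde_open E a b \/ X_tri X E a b.

Lemma tilde_beta_sim E b v y : X_env X E -> is_value v -> closed (App (Lam b) v) -> closed y ->
  tilde_open E (App (Lam b) v) y -> exists y', step y y' /\ tilde_or_tri E (subst0 v b) y'.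
Proof.
  intros HXE Hv [Hcb Hcv] Hcy H. pose proof (bisim_env_is_env E HXE) as HE.
  destruct (tilde_open_app_inv _ _ _ _ H) as [Hr | (a1 & v1 & -> & Ha & Hvv)].
  { exfalso. eapply (env_no_step E); eauto. apply (step_beta Hole); auto. }
  destruct Hcy as [Hca Hcv1].
  assert (Hv1 : is_value v1) by (eapply tilde_open_value; eauto).
  destruct (tilde_open_lam_inv _ _ _ Ha) as [Hb | (b1 & -> & Hbb)].
  - destruct (tilde_open_value E (Lam b) a1 HE (to_base _ _ _ Hb) (ex_intro _ b eq_refl))
      as [b1 ->].
    exists (subst0 v1 b1). split; [apply (step_beta Hole); auto | right].
    apply bisim_beta; repeat split; auto.
  - exists (subst0 v1 b1). split; [apply (step_beta Hole); auto | left].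
    apply tilde_open_subst; auto using is_env_rel_closed.
Qed.

Lemma tilde_reset_sim E v y : X_env X E -> is_value v -> tilde_open E (Reset v) y ->
  exists y', step y y' /\ tilde_or_tri E v y'.
Proof.
  intros HXE Hv H. pose proof (bisim_env_is_env E HXE) as HE.
  destruct (tilde_open_reset_inv _ _ _ H) as [Hr | (v1 & -> & Hvv)].
  { exfalso. eapply (env_no_step E); eauto. apply (step_reset Hole); auto. }
  exists v1. split; [apply (step_reset Hole) | left]; auto.
  eapply tilde_open_value; eauto.
Qed.

Lemma tilde_shift_sim E E0 t y : X_env X E -> pure E0 ->
  closed (Reset (plug E0 (Shift t))) -> closed y -> tilde_open E (Reset (plug E0 (Shift t))) y ->
  exists y', step y y' /\ tilde_or_tri E (Reset (subst0 (cont E0) t)) y'.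
Proof.
  intros HXE HE0 Hc Hcy H. pose proof (bisim_env_is_env E HXE) as HE.
  destruct (tilde_open_reset_inv _ _ _ H) as [Hr | (y1 & -> & Hy)].
  { exfalso. eapply (env_no_step E); eauto. apply (step_shift Hole); auto. }
  apply (closed_plug E0 (Shift t)) in Hc as [HE0c _].
  destruct (tilde_open_pure_shift_inv E E0 t y1 HE HE0 Hy) as
    [(E1 & t1 & -> & HE1 & HEE & Htt)
    | (Ea & Eb & Ea1 & Eb1 & t1 & -> & HEa & HEb & HEa1 & HEb1 & Hst & -> & HEaa)].
  - apply (closed_plug E1 (Shift t1)) in Hcy as [HE1c _].
    exists (Reset (subst0 (cont E1) t1)). split; [apply (step_shift Hole); auto | left].
    apply to_reset, tilde_open_subst; auto using is_env_rel_closed.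
    apply tilde_open_cont; auto.
  - (* The contexts [Ea], [Ea1] around the [E]-related stuck pair become the extra
       contexts of clause (2b). *)
    apply closed_ctx_comp in HE0c as [HEac _].
    apply (closed_plug Ea1) in Hcy as [HEa1c _].
    exists (Reset (subst0 (cont (ctx_comp Ea1 Eb1)) t1)). split.
    { rewrite <- plug_ctx_comp. apply (step_shift Hole), pure_ctx_comp; auto. }
    right. rewrite !cont_ctx_comp.
    apply bisim_shift; auto.
    apply hat_open_hat; auto.
Qed.

Lemma tilde_contract_sim E r r' y : X_env X E -> contract r r' -> closed r -> closed y ->
  tilde_open E r y -> exists y', step y y' /\ tilde_or_tri E r' y'.
Proof.
  intros HXE [b v Hv | v Hv | E0 t HE0] Hc Hcy H;
    eauto using tilde_beta_sim, tilde_reset_sim, tilde_shift_sim.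
Qed.

Lemma ctx_closure_tilde_step G E T0 T0' T1 : is_env G -> X_env X E -> tilde_incl G E ->
  closed T0 -> closed T1 -> tilde_open E T0 T1 -> step T0 T0' ->
  exists T1', steps T1 T1' /\ X_tri (ctx_closure X) G T0' T1'.
Proof.
  intros HG HXE Hincl Hc0 Hc1 H Hs. pose proof (bisim_env_is_env E HXE) as HE.
  pose proof (step_closed _ _ Hs Hc0) as Hc0'.
  apply step_iff_contract in Hs as (F & r & r' & Hr & -> & ->).
  apply closed_plug in Hc0 as [HFc Hcr].
  destruct (tilde_open_plug_inv E F r T1 HE H) as
    [(F1 & x1 & -> & HF & Hx) | (Fa & Fb & Fa1 & z & _ & Hz & _)].
  2: { exfalso. apply (env_no_step E _ _ (plug Fb r') HE Hz). now apply contract_step. }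
  pose proof Hc1 as Hc1'. apply closed_plug in Hc1' as [HF1c Hcx1].
  destruct (tilde_contract_sim E r r' x1 HXE Hr Hcr Hcx1 Hx) as (y' & Hy & Hrel).
  exists (plug F1 y'). split; [now apply step_steps, step_plug |].
  refine (conj HG (conj Hc0' (conj _ _))); [eapply step_closed; eauto using step_plug |].
  destruct Hrel as [Hrel | Hrel].
  - apply (cct_tilde X G E); auto. apply hat_open_plug; auto.
  - apply (cct_plug X G E); auto. apply hat_open_hat; auto.
Qed.

Lemma ctx_closure_tilde_sim_left G E T0 T1 : is_env G -> X_env X E -> tilde_incl G E ->
  closed T0 -> closed T1 -> tilde_open E T0 T1 -> sim_left (ctx_closure X) G T0 T1.
Proof.
  intros HG HXE Hincl Hc0 Hc1 H. pose proof (bisim_env_is_env E HXE) as HE.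
  split; [| split].
  - intros T0' Hs. exact (ctx_closure_tilde_step G E T0 T0' T1 HG HXE Hincl Hc0 Hc1 H Hs).
  - intros Hv. assert (Hv1 : is_value T1) by (eapply tilde_open_value; eauto).
    exists T1. split; [constructor | split; auto].
    apply (ctx_closure_env_add X G E); auto.
  - intros Hs. assert (Hs1 : stuck T1) by (apply (tilde_open_stuck E T0); auto).
    exists T1. split; [constructor | split; auto].
    apply (ctx_closure_env_add X G E); auto.
Qed.

Lemma ctx_closure_plug_normal_sim_left G E F0 F1 s0 s1 : is_env G -> tilde_incl G E ->
  hat E F0 F1 -> X_tri X E s0 s1 -> normal_form s0 ->
  sim_left (ctx_closure X) G (plug F0 s0) (plug F1 s1).
Proof.
  intros HG Hincl Hh Hs Hnf.
  destruct (bisim_sim_left E s0 s1 Hs) as (_ & Hval & Hstuck).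
  assert (Hs1 : exists s1', steps s1 s1' /\ X_env X (env_add E s0 s1')).
  { destruct Hnf as [Hv | Hst].
    - destruct (Hval Hv) as (s1' & ? & _ & ?); eauto.
    - destruct (Hstuck Hst) as (s1' & ? & _ & ?); eauto. }
  destruct Hs1 as (s1' & Hsteps & HXE').
  destruct (bisim_env_is_env _ HXE' s0 s1' (or_intror (conj eq_refl eq_refl)))
    as (Hcs0 & Hcs1' & _).
  destruct (hat_closed_ctx _ _ _ Hh) as [HF0 HF1].
  apply (sim_left_steps _ _ _ _ (plug F1 s1')); [now apply steps_plug |].
  apply (ctx_closure_tilde_sim_left G (env_add E s0 s1')); auto using tilde_incl_env_add.
  - now apply closed_plug.
  - now apply closed_plug.
  - apply hat_open_plug; [| now apply to_base; right].
    apply (hat_open_sub E); [intros; apply to_base; now left | now apply hat_hat_open].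
Qed.

Lemma ctx_closure_plug_sim_left G E F0 F1 s0 s1 : is_env G -> tilde_incl G E ->
  hat E F0 F1 -> X_tri X E s0 s1 -> sim_left (ctx_closure X) G (plug F0 s0) (plug F1 s1).
Proof.
  intros HG Hincl Hh Hs.
  destruct (bisim_tri_closed E s0 s1 Hs) as (_ & Hcs0 & Hcs1).
  destruct (hat_closed_ctx _ _ _ Hh) as [HF0 HF1].
  destruct (closed_trichotomy s0 Hcs0) as [Hv | [[u Hu] | (E0 & t & HE0 & ->)]].
  - apply (ctx_closure_plug_normal_sim_left G E); auto. now left.
  - pose proof (step_plug F0 _ _ Hu) as Hstep. split; [| split].
    + intros T0' HT0. rewrite (step_det _ _ _ HT0 Hstep).
      destruct (bisim_sim_left E s0 s1 Hs) as (Hsim & _).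
      destruct (Hsim u Hu) as (s1' & Hsteps & Hs').
      destruct (bisim_tri_closed E u s1' Hs') as (_ & Hcu & Hcs1').
      exists (plug F1 s1'). split; [now apply steps_plug |].
      refine (conj HG (conj _ (conj _ _))); try (apply closed_plug; auto).
      now apply (cct_plug X G E).
    + intros Hv. exfalso. exact (value_no_step _ _ Hv Hstep).
    + intros [_ Hst]. exfalso. exact (Hst _ Hstep).
  - apply (ctx_closure_plug_normal_sim_left G E); auto. right. now apply pure_shift_stuck.
Qed.

Lemma ctx_closure_sim_left G T0 T1 :
  X_tri (ctx_closure X) G T0 T1 -> sim_left (ctx_closure X) G T0 T1.
Proof.
  intros (HG & Hc0 & Hc1 & H). revert Hc0 Hc1.
  destruct H as [E t0 t1 HXE Hincl Ht | E F0 F1 s0 s1 Hincl Hh Hs]; intros Hc0 Hc1.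
  - now apply (ctx_closure_tilde_sim_left G E).
  - now apply (ctx_closure_plug_sim_left G E).
Qed.

Lemma ctx_closure_env_beta G b0 b1 v0 v1 : X_env (ctx_closure X) G ->
  G (Lam b0) (Lam b1) -> is_value v0 -> is_value v1 -> tilde G v0 v1 ->
  X_tri (ctx_closure X) G (subst0 v0 b0) (subst0 v1 b1).
Proof.
  intros (HG & E & HXE & Hincl) Hb Hv0 Hv1 (Hvv & Hcv0 & Hcv1).
  pose proof (bisim_env_is_env E HXE) as HE.
  destruct (Hincl _ _ Hb) as (Hbb & Hcb0 & Hcb1).
  assert (HvvE : tilde_open E v0 v1) by (eapply tilde_incl_tilde_open; eauto).
  refine (conj HG (conj (closed_subst0 _ _ Hcb0 Hcv0) (conj (closed_subst0 _ _ Hcb1 Hcv1) _))).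
  destruct (tilde_open_lam_inv _ _ _ Hbb) as [HbE | (b1' & Heq & Hbb')].
  - apply (cct_plug X G E Hole Hole); auto; [constructor |].
    apply bisim_beta; repeat split; auto.
  - injection Heq as ->. apply (cct_tilde X G E); auto.
    apply tilde_open_subst; auto using is_env_rel_closed.
Qed.

Lemma ctx_closure_env_shift G E0 E1 s0 s1 E0' E1' : X_env (ctx_closure X) G ->
  pure E0 -> pure E1 -> G (plug E0 (Shift s0)) (plug E1 (Shift s1)) ->
  pure E0' -> pure E1' -> hat G E0' E1' ->
  X_tri (ctx_closure X) G (Reset (subst0 (cont2 E0' E0) s0))
                          (Reset (subst0 (cont2 E1' E1) s1)).
Proof.
  intros (HG & E & HXE & Hincl) HE0 HE1 Hs HE0' HE1' Hh.
  pose proof (bisim_env_is_env E HXE) as HE.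
  destruct (Hincl _ _ Hs) as (Hss & Hcs0 & Hcs1).
  apply closed_plug in Hcs0 as [HE0c Hsh0]. apply closed_plug in Hcs1 as [HE1c Hsh1].
  destruct (hat_closed_ctx _ _ _ Hh) as [HE0'c HE1'c].
  assert (HhE : hat_open E E0' E1').
  { apply (hat_open_sub G); [intros; now apply Hincl | now apply hat_hat_open]. }
  refine (conj HG (conj _ (conj _ _)));
    try (apply closed_subst0; auto; apply closed_cont2; auto).
  destruct (tilde_open_pure_shift_inv E E0 s0 _ HE HE0 Hss) as
    [(E1a & t1 & Heq & HE1a & HEE & Htt)
    | (Ea & Eb & Ea1 & Eb1 & t1 & -> & HEa & HEb & HEa1 & HEb1 & Hst & Heq & HEaa)].
  - destruct (plug_pure_shift_inj _ _ _ _ HE1 HE1a Heq); subst.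
    apply (cct_tilde X G E); auto.
    apply to_reset, tilde_open_subst; auto using is_env_rel_closed.
    rewrite <- !cont_ctx_comp.
    apply tilde_open_cont; try apply closed_ctx_comp; auto using hat_open_ctx_comp.
  - rewrite <- plug_ctx_comp in Heq.
    destruct (plug_pure_shift_inj _ _ _ _ HE1 (proj2 (pure_ctx_comp _ _) (conj HEa1 HEb1)) Heq).
    subst.
    apply closed_ctx_comp in HE0c as [HEac _]. apply closed_ctx_comp in HE1c as [HEa1c _].
    rewrite !cont2_ctx_comp.
    apply (cct_plug X G E Hole Hole); auto; [constructor |].
    apply bisim_shift; auto; try apply pure_ctx_comp; auto.
    apply hat_open_hat; try apply closed_ctx_comp; auto using hat_open_ctx_comp.
Qed.

End CtxClosure.

Definition converse_env_relation (X : env_relation) : env_relation := {|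
  X_env := fun E => X_env X (converse E);
  X_tri := fun E t0 t1 => X_tri X (converse E) t1 t0 |}.

(* Extensional equality is needed since [X_env] is an arbitrary predicate on relations. *)
Lemma converse_env_add E a b : converse (env_add E a b) = env_add (converse E) b a.
Proof.
  apply functional_extensionality; intro x; apply functional_extensionality; intro y.
  apply propositional_extensionality. unfold converse, env_add; tauto.
Qed.

Lemma env_bisimulation_converse X :
  env_bisimulation X -> env_bisimulation (converse_env_relation X).
Proof.
  intros [[Henv Htri] [Hsim Hcl]]. split; [split | split]; simpl.
  - intros E HE. exact (is_env_converse _ (Henv _ HE)).
  - intros E a b Hab. destruct (Htri _ _ _ Hab) as (HE & ? & ?).
    apply is_env_converse in HE. auto.
  - intros E t0 t1 Ht.
    destruct (Hsim _ _ _ Ht) as (Hs0 & Hv0 & Hst0 & Hs1 & Hv1 & Hst1).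
    repeat split; auto.
    + intros Hv. destruct (Hv1 Hv) as (v0 & ? & ? & ?). exists v0. now rewrite converse_env_add.
    + intros Hv. destruct (Hst1 Hv) as (v0 & ? & ? & ?). exists v0. now rewrite converse_env_add.
    + intros Hv. destruct (Hv0 Hv) as (v0 & ? & ? & ?). exists v0. now rewrite converse_env_add.
    + intros Hv. destruct (Hst0 Hv) as (v0 & ? & ? & ?). exists v0. now rewrite converse_env_add.
  - intros E HE. destruct (Hcl _ HE) as [Hbeta Hshift]. split.
    + intros b0 b1 v0 v1 Hb Hv0 Hv1 Hvv. apply Hbeta; auto. now apply tilde_converse.
    + intros E0 E1 s0 s1 E0' E1' P0 P1 Hs P0' P1' Hh. apply Hshift; auto.
      now apply hat_converse.
Qed.

Lemma ctx_closure_tri_converse X G a b : ctx_closure_tri X G a b ->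
  ctx_closure_tri (converse_env_relation X) (converse G) b a.
Proof.
  intros [E t0 t1 HXE Hincl Ht | E F0 F1 s0 s1 Hincl Hh Hs].
  - apply (cct_tilde _ _ (converse E)); auto using tilde_incl_converse, tilde_open_converse.
  - apply (cct_plug _ _ (converse E)); auto using tilde_incl_converse, hat_converse.
Qed.

Lemma ctx_closure_tri_of_converse X G a b :
  ctx_closure_tri (converse_env_relation X) G a b -> ctx_closure_tri X (converse G) b a.
Proof.
  intros [E t0 t1 HXE Hincl Ht | E F0 F1 s0 s1 Hincl Hh Hs].
  - apply (cct_tilde _ _ (converse E)); auto using tilde_incl_converse, tilde_open_converse.
  - apply (cct_plug _ _ (converse E)); auto using tilde_incl_converse, hat_converse.
Qed.

Lemma ctx_closure_env_of_converse X G :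
  X_env (ctx_closure (converse_env_relation X)) G -> X_env (ctx_closure X) (converse G).
Proof.
  intros (HG & E & HXE & Hincl). split; [now apply is_env_converse |].
  exists (converse E). split; auto using tilde_incl_converse.
Qed.

Lemma ctx_closure_bisimulation X : env_bisimulation X -> env_bisimulation (ctx_closure X).
Proof.
  intros HX. pose proof (env_bisimulation_converse X HX) as HXc.
  split; [split | split].
  - intros G [HG _]; auto.
  - intros G a b (HG & Ha & Hb & _); auto.
  - intros G T0 T1 HT.
    destruct (ctx_closure_sim_left X HX G T0 T1 HT) as (Hs0 & Hv0 & Hst0).
    assert (HTc : X_tri (ctx_closure (converse_env_relation X)) (converse G) T1 T0).
    { destruct HT as (HG & Hc0 & Hc1 & H).
      exact (conj (is_env_converse _ HG) (conj Hc1 (conj Hc0 (ctx_closure_tri_converse _ _ _ _ H)))). }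
    destruct (ctx_closure_sim_left _ HXc _ _ _ HTc) as (Hs1 & Hv1 & Hst1).
    split; [exact Hs0 | split; [exact Hv0 | split; [exact Hst0 | split; [| split]]]].
    + intros T1' Hs. destruct (Hs1 T1' Hs) as (T0' & Hsteps & HG' & Hc1' & Hc0' & H').
      exists T0'. split; [exact Hsteps |].
      exact (conj (is_env_converse _ HG')
               (conj Hc0' (conj Hc1' (ctx_closure_tri_of_converse _ _ _ _ H')))).
    + intros Hv. destruct (Hv1 Hv) as (v0 & ? & ? & Henv). exists v0.
      split; [auto | split; [auto |]].
      apply ctx_closure_env_of_converse in Henv. now rewrite converse_env_add in Henv.
    + intros Hst. destruct (Hst1 Hst) as (t0' & ? & ? & Henv). exists t0'.
      split; [auto | split; [auto |]].
      apply ctx_closure_env_of_converse in Henv. now rewrite converse_env_add in Henv.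
  - intros G HG. split; intros; [apply ctx_closure_env_beta | apply ctx_closure_env_shift]; auto.
Qed.

Theorem lemma8 (E : rel) (t0 t1 : term) :
  is_env E -> closed t0 -> closed t1 ->
  bisimilar E t0 t1 ->
  forall F : ctx, closed_ctx F -> bisimilar E (plug F t0) (plug F t1).
Proof.
  intros HE Hc0 Hc1 (X & HX & Ht) F HF.
  exists (ctx_closure X). split; [now apply ctx_closure_bisimulation |].
  refine (conj HE (conj _ (conj _ _))); try (apply closed_plug; auto).
  apply (cct_plug X E E); auto using hat_refl, tilde_incl_refl, is_env_rel_closed.
Qed.
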